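(* Let $\Phi,\Psi$ be join doctrines with $\omega\in\Phi$ and $\Phi$ sound dual to $\Psi^{\mathrm{op}}$, and let $A$ be a $\mathbb{U}$-$\Psi^{\mathrm{op}}$-inflattice. Then $f\mapsto f^{-1}(1)$ is an order-isomorphism from $\mathbb{U}\Psi^{\mathrm{op}}\mathbf{Inf}(A,\mathbb{I})$ (ordered pointwise) onto the set of $\mathbb{U}$-invariant $\rho^{\mathrm{op}}$-closed $\Psi^{\mathrm{op}}$-filters in $A$ (ordered by inclusion), with inverse $\phi\mapsto 1-\rho(\phi,-)$, where $\rho(\phi,a):=\bigwedge_{b\in\phi}\rho(b,a)$.
   Context: Join doctrine: class of posets containing the one-element poset, closed under unions $\bigcup\mathcal{S}$ of sets $\mathcal{S}$ of subposets in the class with $\mathcal{S}$ (by inclusion) in the class, under codomains of monotone maps with cofinal image, and under cofinal subposets. $\omega$ = naturals. $\Phi$ sound dual to $\Psi^{\mathrm{op}}$: for all posets $X,Y$, lower sets $\phi\subseteq Y$ in $\Phi$, lower sets $\psi\subseteq X$ in $\Psi$ and monotone $F:X^{\mathrm{op}}\times Y\to2$, $\bigwedge_{x\in\psi}\bigvee_{y\in\phi}F=\bigvee_{y\in\phi}\bigwedge_{x\in\psi}F$; and for every poset $X$ the lattice of lower sets of $X$ is the closure of the lower sets in $\Psi$ under unions of subfamilies belonging (ordered by inclusion) to $\Phi$. A $\Psi^{\mathrm{op}}$-meet is a meet of a subset $S$ with $S^{\mathrm{op}}\in\Psi$; a $\Psi^{\mathrm{op}}$-filter in $A$ is an upper subset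 closed under $\Psi^{\mathrm{op}}$-meets of its subsets. $\mathbb{I}=[0,1]$, $\mathbb{U}$ = monoid of surjective monotone maps $\mathbb{I}\to\mathbb{I}$. A $\mathbb{U}$-$\Psi^{\mathrm{op}}$-inflattice is a poset with a $\mathbb{U}$-action monotone in both variables, having all $\Psi^{\mathrm{op}}$-meets, each $u$ preserving them. $\mathbb{U}\Psi^{\mathrm{op}}\mathbf{Inf}(A,\mathbb{I})$ = $\mathbb{U}$-equivariant monotone $\Psi^{\mathrm{op}}$-meet-preserving maps $A\to\mathbb{I}$ ($\mathbb{I}$ with evaluation action). With $\dotplus$ truncated addition: $a\le_r b$ iff $u(a)\le v(b)$ for all $u,v\in\mathbb{U}$ with $u(t\dotplus r)\le v(t)$ for all $t$; $\rho(a,b)=\bigwedge\{r\mid a\le_r b\}$. A subset $B\subseteq A$ is a $\rho^{\mathrm{op}}$-closed upper set if every $a$ with $\bigwedge_{b\in B}\rho(b,a)=0$ lies in $B$. $B$ is $\mathbb{U}$-invariant if $u(B)\subseteq B$ for all $u\in\mathbb{U}$. *)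

From mathcomp Require Import all_boot all_order all_algebra.
From mathcomp Require Import boolp classical_sets reals Rstruct.
Set Implicit Arguments. Unset Strict Implicit. Unset Printing Implicit Defensive.
Import Order.TTheory GRing.Theory Num.Theory.
Local Open Scope classical_set_scope.
Local Open Scope ring_scope.

Record poset := Poset {
  car :> Type;
  ple : car -> car -> Prop;
  ple_refl : forall x, ple x x;
  ple_trans : forall x y z, ple x y -> ple y z -> ple x z;
  ple_anti : forall x y, ple x y -> ple y x -> x = y }.

Definition sub_poset (X : poset) (S : set X) : poset.
Proof.
refine (@Poset {x : X | S x} (fun a b => ple (proj1_sig a) (proj1_sig b)) _ _ _).
- by move=> [x ?]; apply: ple_refl.
- by move=> [x ?] [y ?] [z ?] /=; apply: ple_trans.
- move=> [x px] [y py] /= h1 h2; have e := ple_anti h1 h2; subst y.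
  by rewrite (Prop_irrelevance px py).
Defined.

Definition op_poset (X : poset) : poset.
Proof.
refine (@Poset X (fun a b => ple b a) _ _ _).
- by move=> x; apply: ple_refl.
- by move=> x y z h1 h2; apply: ple_trans h2 h1.
- by move=> x y h1 h2; apply: ple_anti.
Defined.

Definition family_poset (X : Type) (F : set (set X)) : poset.
Proof.
refine (@Poset {S : set X | F S} (fun a b => proj1_sig a `<=` proj1_sig b) _ _ _).
- by move=> [S ?].
- by move=> [S ?] [T ?] [U ?] /= h1 h2 x /h1 /h2.
- move=> [S pS] [T pT] /= h1 h2.
  have e : S = T by apply/seteqP; split.
  subst T; by rewrite (Prop_irrelevance pS pT).
Defined.

Definition one_poset : poset.
Proof. by refine (@Poset unit (fun _ _ => True) _ _ _) => // [[]] []. Defined.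

Definition omega_poset : poset.
Proof.
refine (@Poset nat (fun m n => (m <= n)%N) _ _ _).
- exact: leqnn.
- by move=> x y z h1 h2; apply: leq_trans h1 h2.
- by move=> x y h1 h2; apply/eqP; rewrite eqn_leq h1 h2.
Defined.

Definition monotone (X Y : poset) (f : X -> Y) :=
  forall x y, ple x y -> ple (f x) (f y).

Definition cofinal_image (X Y : poset) (f : X -> Y) :=
  forall y : Y, exists x : X, ple y (f x).

Definition cofinal_subset (X : poset) (S : set X) :=
  forall x : X, exists2 s, S s & ple x s.

Definition lower_set (X : poset) (L : set X) :=
  forall x y, ple x y -> L y -> L x.

Definition upper_set (X : poset) (L : set X) :=
  forall x y, ple x y -> L x -> L y.

Definition doctrine := poset -> Prop.

Definition join_doctrine (D : doctrine) : Prop :=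
  [/\ D one_poset,
      (forall (X : poset) (F : set (set X)),
          (forall S, F S -> D (sub_poset S)) -> D (family_poset F) ->
          D (sub_poset (\bigcup_(S in F) S))),
      (forall (X Y : poset) (f : X -> Y),
          monotone f -> cofinal_image f -> D X -> D Y) &
      (forall (X : poset) (S : set X), D X -> cofinal_subset S -> D (sub_poset S))].

(* closure of the Psi-lower sets of X under unions of Phi-subfamilies *)
Definition in_union_closure (Phi Psi : doctrine) (X : poset) (L : set X) : Prop :=
  forall C : set (set X),
    (forall psi, lower_set psi -> Psi (sub_poset psi) -> C psi) ->
    (forall F : set (set X), F `<=` C -> Phi (family_poset F) ->
        C (\bigcup_(S in F) S)) ->
    C L.

Definition sound_dual (Phi Psi : doctrine) : Prop :=
  (forall (X Y : poset) (phi : set Y) (psi : set X) (F : X -> Y -> Prop),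
      lower_set phi -> Phi (sub_poset phi) ->
      lower_set psi -> Psi (sub_poset psi) ->
      (* F : X^op x Y -> 2 monotone *)
      (forall x x' y y', ple x' x -> ple y y' -> F x y -> F x' y') ->
      ((forall x, psi x -> exists2 y, phi y & F x y) <->
       (exists2 y, phi y & forall x, psi x -> F x y)))
  /\
  (forall (X : poset) (L : set X), lower_set L -> in_union_closure Phi Psi L).

Definition is_glb (X : poset) (S : set X) (m : X) :=
  (forall s, S s -> ple m s) /\ (forall l, (forall s, S s -> ple l s) -> ple l m).

Definition psiop_subset (Psi : doctrine) (X : poset) (S : set X) :=
  Psi (op_poset (sub_poset S)).

Definition inI (r : Rdefinitions.R) : bool := (0 <= r) && (r <= 1).
Definition I := {r : Rdefinitions.R | inI r}.
Definition ival (t : I) : Rdefinitions.R := proj1_sig t.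

Lemma I0_proof : inI 0.
Proof. rewrite /inI; by apply/andP; split; [exact: lexx | exact: ler01]. Qed.
Lemma I1_proof : inI 1.
Proof. rewrite /inI; by apply/andP; split; [exact: ler01 | exact: lexx]. Qed.
Definition I0 : I := exist inI 0 I0_proof.
Definition I1 : I := exist inI 1 I1_proof.

Definition Ile (s t : I) := ival s <= ival t.

Definition inU (u : I -> I) :=
  (forall s t, Ile s t -> Ile (u s) (u t)) /\ (forall t, exists s, u s = t).

Lemma tplus_proof (t r : I) : inI (Num.min (ival t + ival r) 1).
Proof.
rewrite /inI.
case: t r => [t /andP[t0 t1]] [r /andP[r0 r1]] /=; rewrite /ival /=.
rewrite ge_min lexx orbT andbT le_min ler01 andbT.
exact: addr_ge0.
Qed.
Definition tplus (t r : I) : I := exist inI _ (tplus_proof t r).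

(* meets in I (the empty meet is 1) *)
Lemma infI_proof (S : set I) : inI (inf ((ival @` S) `|` [set 1])).
Proof.
rewrite /inI.
apply/andP; split.
- apply: lb_le_inf; first by exists 1; right.
  move=> x [[t _ <-]|->]; last exact: ler01.
  by case: t => t p; rewrite /ival /=; case/andP: p.
- apply: ge_inf; last by right.
  exists 0 => x [[t _ <-]|->]; last exact: ler01.
  by case: t => t p; rewrite /ival /=; case/andP: p.
Qed.
Definition infI (S : set I) : I := exist inI _ (infI_proof S).

Lemma compI_proof (t : I) : inI (1 - ival t).
Proof.
rewrite /inI.
case: t => t /andP[t0 t1] /=; rewrite /ival /= subr_ge0 t1 /=.
by rewrite lerBlDr lerDl.
Qed.
Definition compI (t : I) : I := exist inI _ (compI_proof t).

Definition U_inflattice (Psi : doctrine) (A : poset) (act : (I -> I) -> A -> A) :=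
  [/\
      (forall a, act id a = a),
      (forall u v a, inU u -> inU v -> act (u \o v) a = act u (act v a)),
      (forall u v a b, inU u -> inU v -> (forall t, Ile (u t) (v t)) -> ple a b ->
          ple (act u a) (act v b)),
      (forall S : set A, psiop_subset Psi S -> exists m, is_glb S m) &
      (forall u (S : set A) m, inU u -> psiop_subset Psi S -> is_glb S m ->
          is_glb (act u @` S) (act u m))].

Definition UInf_map (Psi : doctrine) (A : poset) (act : (I -> I) -> A -> A)
    (f : A -> I) :=
  [/\ (forall a b, ple a b -> Ile (f a) (f b)),
      (forall u a, inU u -> f (act u a) = u (f a)) &
      (forall (S : set A) m, psiop_subset Psi S -> is_glb S m ->
          f m = infI (f @` S))].

Definition le_r (A : poset) (act : (I -> I) -> A -> A) (r : I) (a b : A) :=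
  forall u v, inU u -> inU v -> (forall t, Ile (u (tplus t r)) (v t)) ->
    ple (act u a) (act v b).

Definition rho (A : poset) (act : (I -> I) -> A -> A) (a b : A) : I :=
  infI [set r | le_r act r a b].

Definition rho_set (A : poset) (act : (I -> I) -> A -> A) (B : set A) (a : A) : I :=
  infI [set rho act b a | b in B].

Definition rhoop_closed (A : poset) (act : (I -> I) -> A -> A) (B : set A) :=
  forall a, rho_set act B a = I0 -> B a.

Definition U_invariant (A : poset) (act : (I -> I) -> A -> A) (B : set A) :=
  forall u b, inU u -> B b -> B (act u b).

Definition psiop_filter (Psi : doctrine) (A : poset) (B : set A) :=
  upper_set B /\
  (forall (S : set A) m, S `<=` B -> psiop_subset Psi S -> is_glb S m -> B m).

Definition UFilt (Psi : doctrine) (A : poset) (act : (I -> I) -> A -> A) (B : set A) :=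
  [/\ U_invariant act B, rhoop_closed act B & psiop_filter Psi B].

(* Write s_c = stretch c for the map t |-> min (t / c, 1) of U and, for a
   U-invariant rho^op-closed Psi^op-filter B, g_B a := 1 - rho (B, a).
   Everything rests on the characterisation
     c <= g_B a  <->  s_c a \in B        (0 < c <= 1).
   Membership gives the bound because rho (s_c a, a) <= 1 - c; conversely
   rho (B, a) < 1 - c already forces s_c a \in B through the definition of
   <=_r and upward closure, and the boundary case c = g_B a is where
   rho^op-closedness enters, since rho (s_c' a, s_c a) <= 1 - c'/c for every
   c' < c.  Monotonicity and meet preservation of g_B then come from B being
   an upper set closed under Psi^op-meets, which every s_c preserves;
   equivariance from factoring s_(u d) o u through s_d, and from cutting u off
   below a point.  For f in UInf (A, I) the identity f (s_c a) = s_c (f a)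
   gives g_(f^-1 1) = f. *)

From mathcomp Require Import all_boot all_order all_algebra.
From mathcomp Require Import boolp classical_sets reals Rstruct.
From mathcomp Require Import ring lra.
Import Order.TTheory GRing.Theory Num.Theory.
Local Open Scope classical_set_scope.
Local Open Scope ring_scope.

Set Implicit Arguments. Unset Strict Implicit.
Local Notation RR := Rdefinitions.R.

Lemma ival_ge0 (t : I) : 0 <= ival t.
Proof. by case: t => x /= /andP[]. Qed.

Lemma ival_le1 (t : I) : ival t <= 1.
Proof. by case: t => x /= /andP[]. Qed.

Lemma ival_inj : injective ival.
Proof. exact: val_inj. Qed.

Lemma ival_eq1 (t : I) : 1 <= ival t -> t = I1.
Proof. by move=> t1; apply: ival_inj; apply/eqP; rewrite eq_le ival_le1. Qed.

Definition clamp (x : RR) : RR := if x < 0 then 0 else if 1 < x then 1 else x.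

Lemma clamp_in01 x : inI (clamp x).
Proof.
by rewrite /inI /clamp; case: ltP => ?; [|case: ltP => ?]; apply/andP; split; lra.
Qed.

Definition mkI (x : RR) : I := exist inI (clamp x) (clamp_in01 x).

Lemma clampE x : 0 <= x -> x <= 1 -> clamp x = x.
Proof. by rewrite /clamp => ? ?; case: ltP => ?; [|case: ltP => ?]; lra. Qed.

Lemma clamp_le0 x : x <= 0 -> clamp x = 0.
Proof. by rewrite /clamp => ?; case: (ltP x 0) => ?; case: (ltP 1 x) => ?; lra. Qed.

Lemma clamp_ge1 x : 1 <= x -> clamp x = 1.
Proof. by rewrite /clamp => ?; case: (ltP x 0) => ?; case: (ltP 1 x) => ?; lra. Qed.

Lemma clamp_eq1 x : clamp x = 1 -> 1 <= x.
Proof. by rewrite /clamp; case: (ltP x 0) => ?; case: (ltP 1 x) => ?; lra. Qed.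

Lemma le_clamp x y : x <= y -> clamp x <= clamp y.
Proof.
by rewrite /clamp => ?; case: (ltP x 0) => ?; case: (ltP 1 x) => ?;
  case: (ltP y 0) => ?; case: (ltP 1 y) => ?; lra.
Qed.

Lemma mkI_ival (t : I) : mkI (ival t) = t.
Proof. by apply: ival_inj; rewrite /= clampE ?ival_ge0 ?ival_le1. Qed.

Lemma compIE t : ival (compI t) = 1 - ival t.
Proof. by []. Qed.

Lemma tplus_le t r : ival (tplus t r) <= ival t + ival r.
Proof. by rewrite /= ge_min lexx. Qed.

Lemma le_tplus x t r : x <= ival t + ival r -> x <= 1 -> x <= ival (tplus t r).
Proof. by move=> ? ?; rewrite /= le_min; apply/andP. Qed.

Lemma infI_le (S : set I) s : S s -> ival (infI S) <= ival s.
Proof.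
move=> Ss; apply: ge_inf; last by left; exists s.
by exists 0 => x [[t _ <-]|->]; [exact: ival_ge0 | exact: ler01].
Qed.

Lemma infI_ge (S : set I) x :
  (forall s, S s -> x <= ival s) -> x <= 1 -> x <= ival (infI S).
Proof.
move=> lbx x1; apply: lb_le_inf; first by exists 1; right.
by move=> y [[t St <-]|->] //; exact: lbx.
Qed.

Lemma infI_lt (S : set I) x :
  ival (infI S) < x -> x <= 1 -> exists2 s, S s & ival s < x.
Proof.
move=> Sx x1; apply: contrapT => noS; move: Sx; apply/negP; rewrite -leNgt.
by apply: infI_ge => // s Ss; rewrite leNgt; apply/negP => sx; apply: noS; exists s.
Qed.

Lemma inU_id : inU id.
Proof. by split => // t; exists t. Qed.

Lemma inU_comp u v : inU u -> inU v -> inU (u \o v).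
Proof.
move=> [u_mono u_surj] [v_mono v_surj]; split=> [s t st | t]; first exact/u_mono/v_mono.
by have [s <-] := u_surj t; have [s' <-] := v_surj s; exists s'.
Qed.

Lemma inU1 u : inU u -> u I1 = I1.
Proof.
move=> [u_mono u_surj]; have [s us] := u_surj I1.
by apply: ival_eq1; have := u_mono s I1 (ival_le1 s); rewrite us.
Qed.

Lemma inU0 u : inU u -> u I0 = I0.
Proof.
move=> [u_mono u_surj]; have [s us] := u_surj I0; apply: ival_inj; apply/eqP.
by rewrite eq_le ival_ge0 andbT; have := u_mono I0 s (ival_ge0 s); rewrite us.
Qed.

Definition ramp (lo hi : RR) (t : I) : I := mkI ((ival t - lo) / (hi - lo)).
Arguments ramp : simpl never.
Local Notation stretch c := (ramp 0 c).

Section Ramp.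
Variables lo hi : RR.
Hypothesis lo_hi : lo < hi.

Let w_gt0 : 0 < hi - lo. Proof. by rewrite subr_gt0. Qed.

Lemma rampE t : lo <= ival t -> ival t <= hi ->
  ival (ramp lo hi t) = (ival t - lo) / (hi - lo).
Proof.
move=> lot thi; rewrite /= clampE //; first by apply: divr_ge0; lra.
by rewrite ler_pdivrMr // mul1r; lra.
Qed.

Lemma ramp_eq0 t : ival t <= lo -> ival (ramp lo hi t) = 0.
Proof. by move=> tlo; rewrite /= clamp_le0 // pmulr_lle0 ?invr_gt0 // subr_le0. Qed.

Lemma ramp_eq1 t : hi <= ival t -> ramp lo hi t = I1.
Proof.
by move=> hit; apply: ival_eq1; rewrite /= clamp_ge1 // ler_pdivlMr // mul1r lerD2r.
Qed.
Lemma ramp_U : 0 <= lo -> hi <= 1 -> inU (ramp lo hi).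
Proof.
move=> lo0 hi1; split=> [s t st | t].
  by apply: le_clamp; rewrite ler_pM2r ?invr_gt0 // lerD2r.
have [t0 t1] := (ival_ge0 t, ival_le1 t).
have tw0 : 0 <= ival t * (hi - lo) by rewrite mulr_ge0 // ltW.
have tw1 : ival t * (hi - lo) <= hi - lo by rewrite ler_piMl // ltW.
exists (mkI (lo + ival t * (hi - lo))); apply: ival_inj.
rewrite rampE /= clampE //; try lra.
by rewrite addrAC subrr add0r mulfK ?gt_eqF.
Qed.
End Ramp.

Lemma stretch_U (c : RR) : 0 < c -> c <= 1 -> inU (stretch c).
Proof. by move=> c0 c1; apply: ramp_U. Qed.

Lemma stretch1 t : stretch 1 t = t.
Proof. by rewrite /ramp !subr0 divr1 mkI_ival. Qed.

Lemma stretchE (c : RR) t : 0 < c -> ival t <= c -> ival (stretch c t) = ival t / c.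
Proof. by move=> c0 tc; rewrite rampE ?subr0 ?ival_ge0. Qed.

Lemma stretch_eq1 (c : RR) t : 0 < c -> stretch c t = I1 -> c <= ival t.
Proof.
by move=> c0 /(congr1 ival) /= /clamp_eq1; rewrite !subr0 ler_pdivlMr // mul1r.
Qed.

Lemma stretch_le_add (c' c : RR) t : 0 < c' -> c' <= c -> c <= 1 ->
  ival (stretch c' t) <= ival (stretch c t) + (1 - c' / c).
Proof.
move=> c'0 c'c c1; have c0 : 0 < c by lra.
have [t0 t1] := (ival_ge0 t, ival_le1 t).
have cc'1 : c' / c <= 1 by rewrite ler_pdivrMr ?mul1r.
case: (leP c' (ival t)) => tc'.
  have : c' / c <= ival (stretch c t).
    case: (leP c (ival t)) => tc; first by rewrite ramp_eq1.
    by rewrite stretchE ?(ltW tc) // ler_pM2r ?invr_gt0.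
  by have := ival_le1 (stretch c' t); lra.
rewrite !stretchE; try lra.
rewrite -subr_ge0.
have -> : ival t / c + (1 - c' / c) - ival t / c' = (c - c') * (c' - ival t) / (c * c').
  by field; rewrite !gt_eqF.
by apply: divr_ge0; apply: mulr_ge0; lra.
Qed.

Lemma stretch_comp_factor u (d : I) : inU u -> 0 < ival d -> 0 < ival (u d) ->
  exists2 w, inU w &
    forall t, Ile (w (stretch (ival d) t)) (stretch (ival (u d)) (u t)).
Proof.
move=> [u_mono u_surj] d0 c0; set c := ival (u d).
have dK (s : I) : ival s <= ival d -> mkI (ival d * (ival s / ival d)) = s.
  by move=> sd; rewrite mulrC divfK ?gt_eqF // mkI_ival.
pose w s := mkI (ival (u (mkI (ival d * ival s))) / c).
exists w => [|t]; first split=> [s s' ss' | z].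
- apply: le_clamp; rewrite ler_pM2r ?invr_gt0 //; apply: u_mono.
  by apply: le_clamp; rewrite ler_pM2l.
- have [z0 z1] := (ival_ge0 z, ival_le1 z).
  have [x ux] := u_surj (mkI (c * ival z)).
  have uxE : ival (u x) = c * ival z.
    by rewrite ux /= clampE ?mulr_ge0 ?mulr_ile1 ?ival_ge0 ?ival_le1.
  case: (leP (ival x) (ival d)) => xd.
    exists (mkI (ival x / ival d)).
    have sE : ival (mkI (ival x / ival d)) = ival x / ival d.
      by rewrite /= clampE ?divr_ge0 ?ival_ge0 // ler_pdivrMr // mul1r.
    by rewrite /w sE dK // uxE [c * _]mulrC mulfK ?gt_eqF // mkI_ival.
  have : c <= c * ival z by rewrite -uxE; apply: u_mono; exact: ltW.
  rewrite ler_pMr // => z_ge1.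
  exists I1; apply: ival_inj.
  by rewrite /w mulr1 mkI_ival -/c divff ?gt_eqF //= clampE //; lra.
- case: (leP (ival d) (ival t)) => td.
    by rewrite [stretch c _]ramp_eq1 //; [exact: ival_le1 | exact: u_mono].
  by rewrite /Ile /w stretchE ?dK ?(ltW td) // /ramp !subr0.
Qed.

Lemma psiop_subset_image (Psi : doctrine) (X Y : poset) (h : X -> Y) (S : set X) :
  join_doctrine Psi -> monotone h -> psiop_subset Psi S -> psiop_subset Psi (h @` S).
Proof.
move=> [_ _ Psi_cod _] h_mono.
pose hS (x : op_poset (sub_poset S)) : op_poset (sub_poset (h @` S)) :=
  exist _ (h (proj1_sig x)) (ex_intro2 _ _ _ (proj2_sig x) erefl).
apply: (Psi_cod _ _ hS).
- by move=> [x Sx] [y Sy]; exact: h_mono.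
- by move=> [y [x Sx hxy]]; exists (exist _ x Sx); rewrite /= -hxy; exact: ple_refl.
Qed.

Section UInflattice.
Variables (Psi : doctrine) (A : poset) (act : (I -> I) -> A -> A).
Hypothesis A_infl : U_inflattice Psi act.

Let act_id a : act id a = a.
Proof. by case: A_infl. Qed.

Let act_comp u v a : inU u -> inU v -> act (u \o v) a = act u (act v a).
Proof. by case: A_infl => _ act_comp _ _ _; exact: act_comp. Qed.

Let act_mono u v a b :
  inU u -> inU v -> (forall t, Ile (u t) (v t)) -> ple a b -> ple (act u a) (act v b).
Proof. by case: A_infl => _ _ act_mono _ _; exact: act_mono. Qed.

Lemma le_r_act p q (r : I) a : inU p -> inU q ->
  (forall t, ival (p t) <= ival (q t) + ival r) -> le_r act r (act p a) (act q a).
Proof.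
move=> Up Uq pqr u v Uu Uv uv; rewrite -!act_comp //.
apply: act_mono (ple_refl a); try exact: inU_comp.
move=> t; apply: le_trans (uv (q t)); apply: Uu.1.
by apply: le_tplus; [exact: pqr | exact: ival_le1].
Qed.

Lemma rho_set_subset (B B' : set A) a : B `<=` B' ->
  ival (rho_set act B' a) <= ival (rho_set act B a).
Proof.
move=> BB'; apply: infI_ge => [_ [b Bb <-]|]; last exact: ival_le1.
by apply: infI_le; exists b => //; exact: BB'.
Qed.

Lemma rho_le r a b : le_r act r a b -> ival (rho act a b) <= ival r.
Proof. exact: infI_le. Qed.

Lemma rho_set_le (B : set A) b a : B b -> ival (rho_set act B a) <= ival (rho act b a).
Proof. by move=> Bb; apply: infI_le; exists b. Qed.

Lemma rho_set_act_le (B : set A) p q a (r : RR) : inU p -> inU q -> 0 <= r -> r <= 1 ->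
  (forall t, ival (p t) <= ival (q t) + r) -> B (act p a) ->
  ival (rho_set act B (act q a)) <= r.
Proof.
move=> Up Uq r0 r1 pqr Bpa; have rE : ival (mkI r) = r by rewrite /= clampE.
rewrite -rE; apply: le_trans (rho_set_le _ Bpa) (rho_le _).
by apply: le_r_act => // t; rewrite rE.
Qed.

Lemma rho_set_le_of_mem_stretch (B : set A) (c : RR) a : 0 < c -> c <= 1 ->
  B (act (stretch c) a) -> ival (rho_set act B a) <= 1 - c.
Proof.
move=> c0 c1; rewrite -{2}(act_id a); apply: rho_set_act_le; try lra.
- exact: ramp_U.
- exact: inU_id.
- by move=> t; have := stretch_le_add t c0 c1 (lexx 1); rewrite stretch1 divr1.
Qed.

Section UpperInvariant.
Variable B : set A.
Hypotheses (B_up : upper_set B) (B_inv : U_invariant act B).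

Lemma mem_stretch_of_rho_set_lt (c : RR) a : 0 < c -> c <= 1 ->
  ival (rho_set act B a) < 1 - c -> B (act (stretch c) a).
Proof.
move=> c0 c1 rac; have [_ [b Bb <-] rbc] := infI_lt rac (ltac:(lra)).
have [r rba rc] := infI_lt rbc (ltac:(lra)).
have r0 := ival_ge0 r.
have Ur : inU (ramp (ival r) 1) by apply: ramp_U => //; lra.
apply: B_up (B_inv Ur Bb); apply: rba => //; first exact: ramp_U.
move=> t; apply: le_clamp; rewrite !subr0.
have [t0 _] := (ival_ge0 t, ival_le1 t).
have tc0 : 0 <= ival t / c by rewrite divr_ge0 // ltW.
have tcE : ival t / c * c = ival t by rewrite divfK // gt_eqF.
by rewrite ler_pdivrMr; have := tplus_le t r; nra.
Qed.

Lemma le_of_mem_act q a x : inU q -> B (act q a) -> ival (q x) < 1 ->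
  ival x <= 1 - ival (rho_set act B a).
Proof.
move=> Uq Bqa qx1.
have Ue : inU (ramp (ival (q x)) 1) by apply: ramp_U; rewrite ?ival_ge0.
suff : ival (rho_set act B a) <= 1 - ival x by lra.
rewrite -(act_id a); apply: (@rho_set_act_le _ (ramp (ival (q x)) 1 \o q)).
- exact: inU_comp.
- exact: inU_id.
- by have := ival_le1 x; lra.
- by have := ival_ge0 x; lra.
- move=> t; rewrite /comp /id; have [t0 t1] := (ival_ge0 t, ival_le1 t).
  case: (leP (ival x) (ival t)) => xt.
    by have := ival_le1 (ramp (ival (q x)) 1 (q t)); lra.
  by rewrite (ramp_eq0 qx1); [have := ival_le1 x; lra | apply: Uq.1; exact: ltW].
- by rewrite act_comp //; exact: B_inv.
Qed.

Hypothesis B_closed : rhoop_closed act B.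

Lemma mem_stretch_of_rho_set_le (c : RR) a : 0 < c -> c <= 1 ->
  ival (rho_set act B a) <= 1 - c -> B (act (stretch c) a).
Proof.
move=> c0 c1 rac; apply: B_closed; apply: ival_inj.
set R := rho_set act B (act (stretch c) a); rewrite [ival I0]/=.
have [R0 R1] := (ival_ge0 R, ival_le1 R).
suff small e : 0 < e -> e < 1 -> ival R <= e.
  by case: (leP (ival R) 0) => ?; [lra | have := small (ival R / 2); lra].
move=> e0 e1; have c'0 : 0 < c * (1 - e) by apply: mulr_gt0; lra.
have c'c : c * (1 - e) <= c by rewrite ler_piMr ?ltW //; lra.
apply: (@rho_set_act_le _ (stretch (c * (1 - e)))); try lra.
- by apply: ramp_U; lra.
- exact: ramp_U.
- move=> t; have := stretch_le_add t c'0 c'c c1.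
  by rewrite mulrAC divff ?mul1r ?gt_eqF //; lra.
- have ce : 0 < c * e by rewrite mulr_gt0.
  by apply: mem_stretch_of_rho_set_lt; lra.
Qed.

End UpperInvariant.

Section MapToFilter.
Variable f : A -> I.
Hypothesis f_map : UInf_map Psi act f.
Local Notation F := (f @^-1` [set I1]).

Lemma preimage1_upper : upper_set F.
Proof.
case: f_map => f_mono _ _ a b ab fa1; apply: ival_eq1.
by have := f_mono a b ab; rewrite /Ile fa1.
Qed.

Lemma preimage1_invariant : U_invariant act F.
Proof. by case: f_map => _ f_equi _ u b Uu fb1; rewrite /= f_equi // fb1 inU1. Qed.

Lemma preimage1_stretch (c : RR) a : 0 < c -> c <= 1 ->
  F (act (stretch c) a) <-> c <= ival (f a).
Proof.
case: f_map => _ f_equi _ c0 c1; rewrite /preimage /= f_equi; last exact: ramp_U.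
by split; [exact: stretch_eq1 | exact: ramp_eq1].
Qed.

Lemma rho_set_preimage1 a : ival (rho_set act F a) = 1 - ival (f a).
Proof.
have [fa0 fa1] := (ival_ge0 (f a), ival_le1 (f a)).
have [ra0 ra1] := (ival_ge0 (rho_set act F a), ival_le1 (rho_set act F a)).
apply/eqP; rewrite eq_le; apply/andP; split.
  case: (leP (ival (f a)) 0) => [|fa_gt0]; first by lra.
  by apply: rho_set_le_of_mem_stretch => //; apply/preimage1_stretch.
rewrite leNgt; apply/negP => ra_lt.
pose c := (1 - ival (rho_set act F a) + ival (f a)) / 2.
suff : c <= ival (f a) by rewrite /c; lra.
apply/(preimage1_stretch a); try (rewrite /c; lra).
apply: mem_stretch_of_rho_set_lt;
  [exact: preimage1_upper | exact: preimage1_invariant | rewrite /c; lra ..].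
Qed.

Lemma UFilt_preimage1 : UFilt Psi act F.
Proof.
case: f_map => _ _ f_meet; split; [exact: preimage1_invariant | | split].
- move=> a /(congr1 ival); rewrite rho_set_preimage1 [ival I0]/= => fa1.
  by apply: ival_eq1; lra.
- exact: preimage1_upper.
- move=> S m SF S_psi m_glb; rewrite /preimage /= (f_meet S m S_psi m_glb).
  by apply: ival_eq1; apply: infI_ge => // _ [x Sx <-]; rewrite (SF x Sx).
Qed.

Lemma comp_rho_set_preimage1 : (fun a => compI (rho_set act F a)) = f.
Proof.
by apply: funext => a; apply: ival_inj; rewrite compIE rho_set_preimage1 subKr.
Qed.

End MapToFilter.

Section FilterToMap.
Variable B : set A.
Hypothesis B_filt : UFilt Psi act B.

Let B_up : upper_set B. Proof. by case: B_filt => _ _ []. Qed.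
Let B_inv : U_invariant act B. Proof. by case: B_filt. Qed.

Lemma mem_stretchP (c : RR) a : 0 < c -> c <= 1 ->
  B (act (stretch c) a) <-> ival (rho_set act B a) <= 1 - c.
Proof.
move=> c0 c1; split; first exact: rho_set_le_of_mem_stretch.
by case: B_filt => _ B_closed _; exact: mem_stretch_of_rho_set_le.
Qed.

Lemma mem_rho_setP a : B a <-> ival (rho_set act B a) <= 0.
Proof.
have := mem_stretchP a ltr01 (lexx 1).
by rewrite subrr (_ : stretch 1 = id) ?act_id //; apply: funext => t; rewrite stretch1.
Qed.

Lemma rho_set_antitone a b : ple a b -> ival (rho_set act B b) <= ival (rho_set act B a).
Proof.
move=> ab; have [ra0 ra1] := (ival_ge0 (rho_set act B a), ival_le1 (rho_set act B a)).
have rb1 := ival_le1 (rho_set act B b).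
case: (leP (1 - ival (rho_set act B a)) 0) => [|c0]; first by lra.
have c1 : 1 - ival (rho_set act B a) <= 1 by lra.
suff : ival (rho_set act B b) <= 1 - (1 - ival (rho_set act B a)) by lra.
apply/mem_stretchP => //; apply: B_up (proj2 (mem_stretchP a c0 c1) _); last by lra.
by apply: act_mono ab => [||t]; [exact: ramp_U | exact: ramp_U | exact: lexx].
Qed.

Lemma comp_rho_set_act_ge u a : inU u ->
  Ile (u (compI (rho_set act B a))) (compI (rho_set act B (act u a))).
Proof.
move=> Uu; set d := compI (rho_set act B a); rewrite /Ile compIE.
have [ud0 ud1] := (ival_ge0 (u d), ival_le1 (u d)).
case: (leP (ival (u d)) 0) => [|ud_gt0].
  by have := ival_le1 (rho_set act B (act u a)); lra.
have d_gt0 : 0 < ival d.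
  rewrite lt_neqAle ival_ge0 andbT; apply/eqP => d0; move: ud_gt0.
  by rewrite (_ : d = I0) ?inU0 ?ltxx //; exact: ival_inj.
have Ud := stretch_U d_gt0 (ival_le1 d).
have [w Uw w_le] := stretch_comp_factor Uu d_gt0 ud_gt0.
have Bd : B (act (stretch (ival d)) a).
  by apply/(mem_stretchP _ d_gt0 (ival_le1 d)); rewrite compIE; lra.
suff : ival (rho_set act B (act u a)) <= 1 - ival (u d) by lra.
apply/(mem_stretchP _ ud_gt0 ud1); rewrite -act_comp //; last exact: ramp_U.
apply: B_up (B_inv Uw Bd); rewrite -act_comp //.
by apply: act_mono (ple_refl a) => //; apply: inU_comp => //; exact: stretch_U.
Qed.

Lemma comp_rho_set_act_le u a : inU u ->
  Ile (compI (rho_set act B (act u a))) (u (compI (rho_set act B a))).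
Proof.
move=> Uu; set d := compI (rho_set act B a); rewrite /Ile compIE.
set c := 1 - ival (rho_set act B (act u a)).
case: (leP c 0) => [|c0]; first by have := ival_ge0 (u d); lra.
have c1 : c <= 1 by rewrite /c; have := ival_ge0 (rho_set act B (act u a)); lra.
have Uq : inU (stretch c \o u) by apply: inU_comp; first exact: ramp_U.
have Bq : B (act (stretch c \o u) a).
  by rewrite act_comp //; [apply/(mem_stretchP _ c0 c1); rewrite /c; lra | exact: ramp_U].
rewrite leNgt; apply/negP => udc.
pose mid := (ival (u d) + c) / 2.
have midE : ival (mkI mid) = mid by rewrite /= clampE /mid; have := ival_ge0 (u d); lra.
have [x ux] := Uu.2 (mkI mid).
have : ival x <= ival d.
  rewrite compIE; apply: le_of_mem_act Bq _ => //.
  have uxc : ival (u x) <= c by rewrite ux midE /mid; lra.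
  by rewrite /comp (stretchE c0 uxc) ux midE ltr_pdivrMr // mul1r /mid; lra.
move=> /Uu.1; rewrite /Ile ux midE /mid; lra.
Qed.

Lemma UInf_map_comp_rho_set : join_doctrine Psi ->
  UInf_map Psi act (fun a => compI (rho_set act B a)).
Proof.
move=> Psi_join; split=> [a b ab | u a Uu | S m S_psi m_glb].
- by rewrite /Ile !compIE; have := rho_set_antitone ab; lra.
- apply: ival_inj; apply/eqP; rewrite eq_le; apply/andP.
  by split; [exact: comp_rho_set_act_le | exact: comp_rho_set_act_ge].
apply: ival_inj; rewrite compIE.
have [rm0 rm1] := (ival_ge0 (rho_set act B m), ival_le1 (rho_set act B m)).
apply/eqP; rewrite eq_le; apply/andP; split.
  apply: infI_ge => [_ [x Sx <-]|]; last by lra.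
  by rewrite compIE; have := rho_set_antitone (m_glb.1 x Sx); lra.
set c := ival (infI _); have c1 : c <= 1 by exact: ival_le1.
case: (leP c 0) => [|c0]; first by lra.
suff : ival (rho_set act B m) <= 1 - c by lra.
have Uc := stretch_U c0 c1.
apply/(mem_stretchP _ c0 c1); case: B_filt => _ _ [_ B_meet].
apply: (B_meet (act (stretch c) @` S)).
- move=> _ [x Sx <-]; apply/(mem_stretchP _ c0 c1).
  have : c <= ival (compI (rho_set act B x)) by apply: infI_le; exists x.
  by rewrite compIE; lra.
- apply: psiop_subset_image => // x y xy.
  by apply: act_mono => // t; exact: lexx.
- by case: A_infl => _ _ _ _; apply.
Qed.

Lemma preimage1_comp_rho_set : (fun a => compI (rho_set act B a)) @^-1` [set I1] = B.
Proof.
apply/seteqP; split=> a; rewrite /preimage /= mem_rho_setP.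
  by move=> /(congr1 ival); rewrite compIE /= => ?; lra.
by move=> ra0; apply: ival_eq1; rewrite compIE; lra.
Qed.

End FilterToMap.

Lemma UInf_map_le_preimage1 f g : UInf_map Psi act f -> UInf_map Psi act g ->
  (forall a, Ile (f a) (g a)) <-> f @^-1` [set I1] `<=` g @^-1` [set I1].
Proof.
move=> f_map g_map; split=> [fg a /= fa1 | FG a].
  by apply: ival_eq1; have := fg a; rewrite /Ile fa1.
have := rho_set_subset a FG; rewrite /Ile !rho_set_preimage1 //; lra.
Qed.

End UInflattice.

Unset Implicit Arguments.
Local Close Scope ring_scope.

Theorem proposition4p9 (Phi Psi : doctrine) (A : poset)
    (act : (I -> I) -> A -> A) :
  join_doctrine Phi -> join_doctrine Psi -> Phi omega_poset ->
  sound_dual Phi Psi -> U_inflattice Psi act ->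
  [/\ (* f |-> f^-1(1) lands in the invariant closed filters *)
      (forall f, UInf_map Psi act f -> UFilt Psi act (f @^-1` [set I1])),
      (* phi |-> 1 - rho(phi, -) lands in UInf(A, I) *)
      (forall B, UFilt Psi act B -> UInf_map Psi act (fun a => compI (rho_set act B a))),
      (* the two maps are mutually inverse *)
      (forall f, UInf_map Psi act f ->
          (fun a => compI (rho_set act (f @^-1` [set I1]) a)) = f),
      (forall B, UFilt Psi act B ->
          (fun a => compI (rho_set act B a)) @^-1` [set I1] = B) &
      (* and order-preserving and reflecting *)
      (forall f g, UInf_map Psi act f -> UInf_map Psi act g ->
          ((forall a, Ile (f a) (g a)) <->
           (f @^-1` [set I1] `<=` g @^-1` [set I1])))].
Proof.
move=> _ Psi_join _ _ A_infl.
split=> [f f_map | B B_filt | f f_map | B B_filt | f g f_map g_map].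
- exact (UFilt_preimage1 A_infl f_map).
- exact (UInf_map_comp_rho_set A_infl B_filt Psi_join).
- exact (comp_rho_set_preimage1 A_infl f_map).
- exact (preimage1_comp_rho_set A_infl B_filt).
- exact (UInf_map_le_preimage1 A_infl f_map g_map).
Qed.
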